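(* Let $k\ge 3$ be an integer and $1/2<q<1$. Let $f:[1/k,1]\to\mathbb R$ be given by $$f(x) = x^q(k-2+x)^{(k-1)q} + (k-1)(1-x)^{2q}(k-2+x)^{(k-2)q}.$$ Then $f$ attains its maximum on $[1/k,1]$ at $x=1/k$ or at $x=1$. *)

From Stdlib Require Import Reals.
Open Scope R_scope.

(* Real power x^q for x >= 0: 0^q = 0 (q > 0 here), x^q = exp(q ln x) for x > 0. *)
Definition rpow (x q : R) : R :=
  if Rle_dec x 0 then 0 else Rpower x q.

Definition f4p5 (k : nat) (q x : R) : R :=
  rpow x q * rpow (INR k - 2 + x) ((INR k - 1) * q)
  + (INR k - 1) * rpow (1 - x) (2 * q) * rpow (INR k - 2 + x) ((INR k - 2) * q).

From Stdlib Require Import Reals Lra Classical.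
From Coquelicot Require Import Coquelicot.
Open Scope R_scope.

(* Differentiating gives f'(x) = w(x) (A(x) - B(x)) with w > 0 on (0,1), where
   A(x) = x^q (k-2+x)^((k-1)q) (1-x) and B(x) = (k-1) (1-x)^(2q) (k-2+x)^((k-2)q) x.
   So f' has the sign of psi = ln A - ln B.  Now psi(1/k) = 0, and psi' has the sign
   of the increasing affine function (qk-1) x - (1-q)(k-2); hence once psi becomes
   positive to the right of 1/k it stays nonnegative.  Thus f' changes sign at most
   once on (1/k, 1), from negative to positive, and f first decreases and then
   increases. *)

Definition single_crossing (u : R -> R) (a b : R) : Prop :=
  forall s t, a < s -> s <= t -> t < b -> 0 < u s -> 0 <= u t.

Lemma nondecreasing_single_crossing (u : R -> R) (a b : R) :
  (forall s t, a < s -> s <= t -> t < b -> u s <= u t) -> single_crossing u a b.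
Proof. intros Hu s t Hs Hst Ht Hus; specialize (Hu s t Hs Hst Ht); lra. Qed.

Lemma single_crossing_sign_transfer (u v : R -> R) (a b : R) :
  (forall x, a < x < b -> 0 < v x -> 0 < u x) ->
  (forall x, a < x < b -> 0 <= u x -> 0 <= v x) ->
  single_crossing u a b -> single_crossing v a b.
Proof.
  intros Hvu Huv Hu s t Hs Hst Ht Hvs.
  apply Huv; [lra|]. apply (Hu s t); auto; apply Hvu; auto; lra.
Qed.

Section MeanValue.

Variables (g dg : R -> R) (a b : R).
Hypothesis g_derive : forall x, a < x < b -> is_derive g x (dg x).
Hypothesis g_cont : forall x, a <= x <= b -> continuous g x.

Lemma MVT_is_derive : a < b ->
  exists c, a < c < b /\ g b - g a = dg c * (b - a).
Proof.
  intros Hab.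
  assert (g_derivable : forall c, a < c < b -> derivable_pt g c).
  { intros c Hc; exists (dg c); apply is_derive_Reals; auto. }
  destruct (MVT g id a b g_derivable (fun c _ => derivable_pt_id c) Hab
     (fun c Hc => proj2 (continuity_pt_filterlim g c) (g_cont c Hc))
     (fun c _ => derivable_continuous_pt _ _ (derivable_pt_id c))) as [c [Hc E]].
  rewrite (derive_pt_eq_0 g c (dg c) (g_derivable c Hc)) in E
    by (apply is_derive_Reals; auto).
  rewrite (derive_pt_eq_0 id c 1 (derivable_pt_id c)) in E
    by apply derivable_pt_lim_id.
  exists c; split; [exact Hc | unfold id in E; lra].
Qed.

Lemma le_of_deriv_nonneg : a <= b -> (forall x, a < x < b -> 0 <= dg x) -> g a <= g b.
Proof.
  intros [Hab|<-] Hdg; [|lra].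
  destruct (MVT_is_derive Hab) as [c [Hc E]].
  specialize (Hdg c Hc); nra.
Qed.

Lemma ge_of_deriv_nonpos : a <= b -> (forall x, a < x < b -> dg x <= 0) -> g b <= g a.
Proof.
  intros [Hab|<-] Hdg; [|lra].
  destruct (MVT_is_derive Hab) as [c [Hc E]].
  specialize (Hdg c Hc); nra.
Qed.

End MeanValue.

Lemma single_crossing_of_deriv (h dh : R -> R) (a b : R) :
  h a <= 0 ->
  (forall x, a < x < b -> is_derive h x (dh x)) ->
  (forall x, a <= x < b -> continuous h x) ->
  single_crossing dh a b -> single_crossing h a b.
Proof.
  intros Ha Hd Hc Hdh s t Hs Hst Ht Hhs.
  destruct (MVT_is_derive h dh a s) as [c [Hcs E]]; try (intros; apply Hd || apply Hc; lra); [lra|].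
  assert (Hdc : 0 < dh c) by nra.
  enough (h s <= h t) by lra.
  apply (le_of_deriv_nonneg h dh); try (intros; apply Hd || apply Hc; lra); [lra|].
  intros x Hx; apply (Hdh c x); lra.
Qed.

Lemma single_crossing_max_at_endpoints (g dg : R -> R) (a b : R) :
  (forall x, a < x < b -> is_derive g x (dg x)) ->
  (forall x, a <= x <= b -> continuous g x) ->
  single_crossing dg a b ->
  (forall x, a <= x <= b -> g x <= g a) \/ (forall x, a <= x <= b -> g x <= g b).
Proof.
  intros Hd Hc Hdg.
  assert (pointwise : forall x, a <= x <= b -> g x <= g a \/ g x <= g b).
  { intros x Hx.
    destruct (classic (exists s, a < s < x /\ 0 < dg s)) as [[s [Hs Hdgs]]|Hnone].
    - right. apply (le_of_deriv_nonneg g dg); try (intros; apply Hd || apply Hc; lra); [lra|].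
      intros t Ht; apply (Hdg s t); lra.
    - left. apply (ge_of_deriv_nonpos g dg); try (intros; apply Hd || apply Hc; lra); [lra|].
      intros t Ht; apply Rnot_lt_le; intros Hdgt; apply Hnone; exists t; split; [lra|exact Hdgt]. }
  destruct (Rle_or_lt (g a) (g b)); [right|left];
    intros x Hx; destruct (pointwise x Hx); lra.
Qed.

Lemma rpow_of_pos (z p : R) : 0 < z -> rpow z p = exp (p * ln z).
Proof. intros Hz; unfold rpow; destruct (Rle_dec z 0); [lra | reflexivity]. Qed.

Lemma ln_rpow (z p : R) : 0 < z -> ln (rpow z p) = p * ln z.
Proof. intros Hz; rewrite rpow_of_pos, ln_exp; auto. Qed.

Lemma rpow_pos (z p : R) : 0 < z -> 0 < rpow z p.
Proof. intros Hz; rewrite rpow_of_pos; auto; apply exp_pos. Qed.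

Lemma rpow_continuous_pos (z p : R) : 0 < z -> continuous (fun t => rpow t p) z.
Proof.
  intros Hz. apply (continuous_ext_loc _ (fun t => exp (p * ln t))).
  { apply (locally_interval _ z 0 p_infty); [exact Hz | exact I |].
    intros y Hy _; rewrite rpow_of_pos; auto. }
  apply (ex_derive_continuous (K:=R_AbsRing) (V:=R_NormedModule)). auto_derive; lra.
Qed.

Lemma rpow_continuous_0 (p : R) : 0 < p -> continuous (fun t => rpow t p) 0.
Proof.
  intros Hp. apply filterlim_locally. intros eps.
  assert (Hdelta : 0 < Rpower eps (/ p)) by apply exp_pos.
  exists (mkposreal _ Hdelta). intros t Ht.
  change (Rabs (rpow t p - rpow 0 p) < eps).
  assert (Ht0 : Rabs t < Rpower eps (/ p)) by (rewrite <- (Rminus_0_r t); exact Ht).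
  unfold rpow at 2; destruct (Rle_dec 0 0) as [_|]; [|lra].
  rewrite Rminus_0_r; unfold rpow. destruct (Rle_dec t 0).
  - rewrite Rabs_R0; apply cond_pos.
  - rewrite Rabs_pos_eq by (left; apply exp_pos).
    assert (Heps : Rpower (Rpower eps (/ p)) p = eps).
    { rewrite Rpower_mult, Rinv_l, Rpower_1; [reflexivity | apply cond_pos | lra]. }
    rewrite <- Heps. apply Rlt_Rpower_l; [exact Hp|].
    split; [lra|]. apply Rabs_def2 in Ht0; lra.
Qed.

Section F4p5.

Variables (k : nat) (q : R).
Hypothesis k_ge_3 : (3 <= k)%nat.
Hypothesis qk_ge_1 : 1 <= q * INR k.

Local Notation K := (INR k).

Lemma K_ge_3 : 3 <= K.
Proof. replace 3 with (INR 3) by (simpl; ring). apply le_INR, k_ge_3. Qed.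

Definition term1 (x : R) : R := rpow x q * rpow (K - 2 + x) ((K - 1) * q).
Definition term2 (x : R) : R := rpow (1 - x) (2 * q) * rpow (K - 2 + x) ((K - 2) * q).

Definition f4p5_deriv (x : R) : R :=
  q * (K - 2 + K * x) / (x * (1 - x) * (K - 2 + x))
  * (term1 x * (1 - x) - (K - 1) * term2 x * x).

Lemma is_derive_f4p5 (x : R) : 0 < x < 1 -> is_derive (f4p5 k q) x (f4p5_deriv x).
Proof.
  intros Hx. pose proof K_ge_3 as HK.
  apply (is_derive_ext_loc (fun t => exp (q * ln t + (K - 1) * q * ln (K - 2 + t))
                    + (K - 1) * exp (2 * q * ln (1 - t) + (K - 2) * q * ln (K - 2 + t)))).
  { apply (locally_interval _ x 0 1); try (simpl; lra).
    intros t Ht0 Ht1; simpl in Ht0, Ht1. unfold f4p5.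
    rewrite !rpow_of_pos, !exp_plus by lra. simpl; ring. }
  auto_derive; [repeat split; lra|].
  unfold f4p5_deriv, term1, term2. rewrite !rpow_of_pos, !exp_plus by lra.
  replace (1 + - x) with (1 - x) by ring.
  field. repeat split; lra.
Qed.

Lemma term1_pos (x : R) : 0 < x < 1 -> 0 < term1 x.
Proof. intros Hx; pose proof K_ge_3; unfold term1; apply Rmult_lt_0_compat; apply rpow_pos; lra. Qed.

Lemma term2_pos (x : R) : 0 < x < 1 -> 0 < term2 x.
Proof. intros Hx; pose proof K_ge_3; unfold term2; apply Rmult_lt_0_compat; apply rpow_pos; lra. Qed.

Definition log_ratio (x : R) : R :=
  (q - 1) * ln x + q * ln (K - 2 + x) + (1 - 2 * q) * ln (1 - x) - ln (K - 1).

Lemma log_ratio_eq (x : R) : 0 < x < 1 ->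
  log_ratio x = ln (term1 x * (1 - x)) - ln ((K - 1) * term2 x * x).
Proof.
  intros Hx; pose proof K_ge_3.
  unfold log_ratio, term1, term2.
  rewrite !ln_mult, !ln_rpow
    by (repeat apply Rmult_lt_0_compat; try apply rpow_pos; lra).
  lra.
Qed.

Definition log_ratio_deriv (x : R) : R :=
  ((q * K - 1) * x - (1 - q) * (K - 2)) / (x * (1 - x) * (K - 2 + x)).

Lemma is_derive_log_ratio (x : R) : 0 < x < 1 -> is_derive log_ratio x (log_ratio_deriv x).
Proof.
  intros Hx; pose proof K_ge_3. unfold log_ratio, log_ratio_deriv.
  auto_derive; [repeat split; lra|]. field. repeat split; lra.
Qed.

Lemma q_pos : 0 < q.
Proof. pose proof K_ge_3; nra. Qed.

Lemma inv_K_bounds : 0 < 1 / K < 1.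
Proof.
  pose proof K_ge_3. split.
  - apply Rdiv_lt_0_compat; lra.
  - apply (Rmult_lt_reg_r K); [lra|]. unfold Rdiv. rewrite Rmult_assoc, Rinv_l; lra.
Qed.

Lemma log_ratio_at_inv_K : log_ratio (1 / K) = 0.
Proof.
  pose proof K_ge_3. unfold log_ratio.
  replace (K - 2 + 1 / K) with ((K - 1) * (K - 1) / K) by (field; lra).
  replace (1 - 1 / K) with ((K - 1) / K) by (field; lra).
  rewrite !ln_div, ln_mult, ln_1 by (try apply Rmult_lt_0_compat; lra).
  ring.
Qed.

Lemma single_crossing_log_ratio_deriv : single_crossing log_ratio_deriv (1 / K) 1.
Proof.
  pose proof K_ge_3; pose proof inv_K_bounds.
  assert (Hden : forall x, 0 < x < 1 -> 0 < x * (1 - x) * (K - 2 + x))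
    by (intros x Hx; repeat apply Rmult_lt_0_compat; lra).
  apply (single_crossing_sign_transfer (fun x => (q * K - 1) * x - (1 - q) * (K - 2))).
  - intros x Hx Hpos.
    replace (_ - _) with (log_ratio_deriv x * (x * (1 - x) * (K - 2 + x)))
      by (unfold log_ratio_deriv; field; lra).
    apply Rmult_lt_0_compat; [exact Hpos | apply Hden; lra].
  - intros x Hx Hnum. apply Rdiv_le_0_compat; [exact Hnum | apply Hden; lra].
  - apply nondecreasing_single_crossing. intros s t _ Hst _. nra.
Qed.

Lemma single_crossing_log_ratio : single_crossing log_ratio (1 / K) 1.
Proof.
  pose proof inv_K_bounds.
  apply (single_crossing_of_deriv _ log_ratio_deriv).
  - rewrite log_ratio_at_inv_K; lra.
  - intros x Hx; apply is_derive_log_ratio; lra.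
  - intros x Hx. apply (ex_derive_continuous (K:=R_AbsRing) (V:=R_NormedModule)).
    exists (log_ratio_deriv x); apply is_derive_log_ratio; lra.
  - exact single_crossing_log_ratio_deriv.
Qed.

Lemma f4p5_deriv_weight_pos (x : R) : 0 < x < 1 ->
  0 < q * (K - 2 + K * x) / (x * (1 - x) * (K - 2 + x)).
Proof.
  intros Hx; pose proof K_ge_3; pose proof q_pos.
  apply Rdiv_lt_0_compat; [apply Rmult_lt_0_compat | repeat apply Rmult_lt_0_compat]; nra.
Qed.

Lemma single_crossing_f4p5_deriv : single_crossing f4p5_deriv (1 / K) 1.
Proof.
  pose proof K_ge_3; pose proof inv_K_bounds.
  apply (single_crossing_sign_transfer log_ratio); [intros x Hx..| exact single_crossing_log_ratio].
  all: assert (Hx01 : 0 < x < 1) by lra.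
  all: assert (Hgain : 0 < term1 x * (1 - x)) by (pose proof (term1_pos x Hx01); nra).
  all: assert (Hloss : 0 < (K - 1) * term2 x * x)
         by (pose proof (term2_pos x Hx01); apply Rmult_lt_0_compat; [nra | lra]).
  all: pose proof (f4p5_deriv_weight_pos x Hx01) as Hweight.
  all: rewrite (log_ratio_eq x Hx01); unfold f4p5_deriv.
  - intros Hd.
    assert (Hlt : (K - 1) * term2 x * x < term1 x * (1 - x))
      by (apply Rminus_gt_0_lt, (Rmult_lt_reg_l _ _ _ Hweight); lra).
    pose proof (ln_increasing _ _ Hloss Hlt). lra.
  - intros Hl. apply Rmult_le_pos; [lra|].
    destruct (Rle_or_lt ((K - 1) * term2 x * x) (term1 x * (1 - x))) as [Hle|Hlt]; [lra|].
    pose proof (ln_increasing _ _ Hgain Hlt). lra.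
Qed.

Lemma f4p5_continuous_at_1 : continuous (f4p5 k q) 1.
Proof.
  pose proof K_ge_3; pose proof q_pos.
  assert (Hshift : forall p, continuous (fun t => rpow (K - 2 + t) p) 1).
  { intros p. apply (continuous_comp (fun t => K - 2 + t) (fun t => rpow t p)).
    - apply (continuous_plus (V:=R_NormedModule) (fun _ => K - 2) (fun t => t));
        [apply continuous_const | apply continuous_id].
    - apply rpow_continuous_pos; lra. }
  assert (Hflip : continuous (fun t => rpow (1 - t) (2 * q)) 1).
  { apply (continuous_comp (fun t => 1 - t) (fun t => rpow t (2 * q))).
    - apply (continuous_minus (V:=R_NormedModule) (fun _ => 1) (fun t => t));
        [apply continuous_const | apply continuous_id].
    - replace (1 - 1) with 0 by ring. apply rpow_continuous_0; lra. }
  apply (continuous_plus (V:=R_NormedModule)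
           (fun x => rpow x q * rpow (K - 2 + x) ((K - 1) * q))
           (fun x => (K - 1) * rpow (1 - x) (2 * q) * rpow (K - 2 + x) ((K - 2) * q))).
  - apply (continuous_mult (K:=R_AbsRing) (fun x => rpow x q)); [|apply Hshift].
    apply rpow_continuous_pos; lra.
  - apply (continuous_mult (K:=R_AbsRing) (fun x => (K - 1) * rpow (1 - x) (2 * q)));
      [|apply Hshift].
    apply (continuous_mult (K:=R_AbsRing) (fun _ => K - 1)); [apply continuous_const | exact Hflip].
Qed.

Lemma f4p5_continuous (x : R) : 0 < x <= 1 -> continuous (f4p5 k q) x.
Proof.
  intros [Hx0 [Hx1 | ->]]; [|exact f4p5_continuous_at_1].
  apply (ex_derive_continuous (K:=R_AbsRing) (V:=R_NormedModule)).
  exists (f4p5_deriv x); apply is_derive_f4p5; lra.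
Qed.

Lemma f4p5_max_at_endpoints :
  (forall x, 1 / K <= x <= 1 -> f4p5 k q x <= f4p5 k q (1 / K))
  \/ (forall x, 1 / K <= x <= 1 -> f4p5 k q x <= f4p5 k q 1).
Proof.
  pose proof inv_K_bounds.
  apply (single_crossing_max_at_endpoints _ f4p5_deriv).
  - intros x Hx; apply is_derive_f4p5; lra.
  - intros x Hx; apply f4p5_continuous; lra.
  - exact single_crossing_f4p5_deriv.
Qed.

End F4p5.

Theorem lemma4p5 (k : nat) (q : R) :
  (3 <= k)%nat -> 1/2 < q < 1 ->
  (forall x, 1 / INR k <= x <= 1 -> f4p5 k q x <= f4p5 k q (1 / INR k))
  \/ (forall x, 1 / INR k <= x <= 1 -> f4p5 k q x <= f4p5 k q 1).
Proof.
  intros Hk Hq. apply f4p5_max_at_endpoints; [exact Hk|].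
  pose proof (K_ge_3 k Hk). nra.
Qed.
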